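(* Let $C$ be a nonzero linear code of length $n$ over $R$ with component codes $C_1,\dots,C_8$. Then $C$ is an MDS code over $R$ if and only if each $C_i$ ($1\le i\le 8$) is an MDS code over $\mathbb{Z}_4$ and all the $C_i$ have the same parameters (same cardinality and same minimum Hamming distance).
   Context: $R=\mathbb{Z}_4[u,v,w]/\langle u^2-u,v^2-v,w^2-w\rangle$, with idempotents $\eta_1=(1-u)(1-v)(1-w)$, $\eta_2=u(1-v)(1-w)$, $\eta_3=(1-u)v(1-w)$, $\eta_4=(1-u)(1-v)w$, $\eta_5=uv(1-w)$, $\eta_6=u(1-v)w$, $\eta_7=(1-u)vw$, $\eta_8=uvw$; every $\mathbf{x}\in R^n$ is uniquely $\sum_{i=1}^8\mathbf{x}_i\eta_i$ with $\mathbf{x}_i\in\mathbb{Z}_4^n$. A linear code over $R$ is an $R$-submodule of $R^n$; its component codes are $C_i=\{\mathbf{x}_i:\ \mathbf{x}\in C\}\subseteq\mathbb{Z}_4^n$. $d_H$ denotes minimum Hamming distance. A code $D$ of length $n$ over a finite ring $S$ is MDS if $d_H(D)=n-\log_{|S|}|D|+1$; here $|R|=4^8$. *)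

From HB Require Import structures.
From mathcomp Require Import all_boot all_order all_algebra.
Set Implicit Arguments. Unset Strict Implicit. Unset Printing Implicit Defensive.
Import GRing.Theory.
Local Open Scope ring_scope.

(* Monomials of Z4[u,v,w]/<u^2-u,v^2-v,w^2-w> are u_A = prod_{j in A} u_j,
   A a subset of {0,1,2} (0 = u, 1 = v, 2 = w).  An element of R is its
   coefficient vector in this Z4-basis. *)
Definition idx := {set 'I_3}.
Definition R := {ffun idx -> 'Z_4}.

(* u_A * u_B = u_(A :|: B) since u_j^2 = u_j *)
Definition mulR (x y : R) : R :=
  [ffun S => \sum_(A : idx) \sum_(B : idx | A :|: B == S) x A * y B].
Definition cR (c : 'Z_4) : R := [ffun S => if S == set0 then c else 0].
Definition oneR : R := cR 1.
Definition uR (j : 'I_3) : R := [ffun S => if S == [set j] then 1 else 0].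

(* Primitive idempotents: eta_T = prod_{j in T} u_j * prod_{j notin T} (1 - u_j).
   E.g. T = set0 gives eta_1 = (1-u)(1-v)(1-w), T = [set 0] gives eta_2, ...,
   T = setT gives eta_8 = uvw. *)
Definition eta (T : idx) : R :=
  \big[mulR/oneR]_(j < 3) (if j \in T then uR j else oneR - uR j).

Definition vecR n := {ffun 'I_n -> R}.
Definition vecZ n := {ffun 'I_n -> 'Z_4}.

Definition smul n (r : R) (x : vecR n) : vecR n := [ffun i => mulR r (x i)].

Definition linear_code n (C : {set vecR n}) : Prop :=
  [/\ (0 : vecR n) \in C,
      {in C &, forall x y, x + y \in C} &
      forall r : R, {in C, forall x, smul r x \in C}].

Definition decomp n (y : {ffun idx -> vecZ n}) : vecR n :=
  [ffun i => \sum_(T : idx) mulR (cR (y T i)) (eta T)].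

Definition component n (x : vecR n) (T : idx) : vecZ n :=
  odflt 0 (omap (fun y : {ffun idx -> vecZ n} => y T) [pick y | decomp y == x]).

Definition comp_code n (C : {set vecR n}) (T : idx) : {set vecZ n} :=
  [set component x T | x in C].

(* Hamming distance and minimum Hamming distance (n.+1 for codes with < 2 words) *)
Definition hdist (A : finType) n (x y : {ffun 'I_n -> A}) : nat :=
  #|[set i | x i != y i]|.
Definition dmin (A : finType) n (D : {set {ffun 'I_n -> A}}) : nat :=
  \big[minn/n.+1]_(x in D) \big[minn/n.+1]_(y in D | y != x) hdist x y.

(* MDS: d_H(D) = n - log_{|A|} |D| + 1, i.e. |D| = |A|^(n - d_H(D) + 1) *)
Definition MDS (A : finType) n (D : {set {ffun 'I_n -> A}}) : Prop :=
  #|D| = (#|A| ^ (n.+1 - dmin D))%N /\ (dmin D <= n.+1)%N.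

From mathcomp Require Import all_boot all_order all_algebra zify.
Set Implicit Arguments. Unset Strict Implicit. Unset Printing Implicit Defensive.
Import GRing.Theory.
Local Open Scope ring_scope.

(* For S a subset of {u,v,w}, evaluating an element of R at
   the point (u,v,w) with u_j = [j \in S] is a ring morphism ev _ S : R -> Z4;
   it sends eta_T to [T == S], and the eight evaluations jointly are injective.
   Hence ev realises the Chinese-remainder isomorphism R ~ Z4^8, under which
   the component x_T of x in R^n is the coordinatewise evaluation at T.
   From this we get three facts about a linear code C with components C_T:
   (1) d(C) <= d(C_T), by looking at eta_T * C inside C;
   (2) d(C) >= min_T d(C_T), since two distinct codewords differ in some
       component;
   (3) |C| = prod_T |C_T|, since C is the direct sum of the eta_T * C.
   Together with the Singleton bound |D| <= |A|^(n - d(D) + 1), valid for any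
   code over any finite alphabet, the theorem follows by comparing
   |C| = prod_T |C_T| <= prod_T 4^(n - d(C_T) + 1) <= (4^8)^(n - d(C) + 1):
   equality at the ends forces equality in every factor, and conversely. *)

(* ev x S is x evaluated at u_j := [j \in S]; on the monomial basis it sums
   the coefficients of the monomials u_A with A \subset S. *)
Definition ev (x : R) (S : idx) : 'Z_4 := \sum_(A : idx | A \subset S) x A.

Lemma ev0 S : ev 0 S = 0.
Proof. by rewrite /ev big1 // => A _; rewrite ffunE. Qed.

Lemma evD x y S : ev (x + y) S = ev x S + ev y S.
Proof. by rewrite /ev -big_split /=; apply: eq_bigr => A _; rewrite !ffunE. Qed.

Lemma evN x S : ev (- x) S = - ev x S.
Proof. by rewrite /ev -sumrN; apply: eq_bigr => A _; rewrite !ffunE. Qed.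

Lemma ev_sum (I : finType) (F : I -> R) S : ev (\sum_i F i) S = \sum_i ev (F i) S.
Proof. exact: (big_morph (ev^~ S) (fun x y => evD x y S) (ev0 S)). Qed.

Lemma evC c S : ev (cR c) S = c.
Proof.
rewrite /ev (bigD1 set0) ?sub0set //= big1 ?addr0 ?ffunE ?eqxx //.
by move=> A /andP[_ /negbTE]; rewrite ffunE => ->.
Qed.

Lemma ev1 S : ev oneR S = 1.
Proof. exact: evC. Qed.

Lemma evU j S : ev (uR j) S = (j \in S)%:R.
Proof.
have [jS | jNS] := boolP (j \in S).
  rewrite /ev (bigD1 [set j]) ?sub1set //= big1 ?addr0 ?ffunE ?eqxx //.
  by move=> A /andP[_ /negbTE]; rewrite ffunE => ->.
rewrite /ev big1 // => A AS; rewrite ffunE; case: eqP => // Aj.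
by move: AS; rewrite Aj sub1set (negbTE jNS).
Qed.

(* Multiplicativity: u_A * u_B = u_(A :|: B), and A :|: B \subset S iff both
   A and B are. *)
Lemma evM x y S : ev (mulR x y) S = ev x S * ev y S.
Proof.
rewrite /ev /mulR.
transitivity (\sum_(A : idx) \sum_(B : idx) if A :|: B \subset S then x A * y B else 0).
  under eq_bigr do rewrite ffunE.
  rewrite exchange_big /=; apply: eq_bigr => A _.
  under eq_bigr do rewrite big_mkcond /=.
  rewrite exchange_big /=; apply: eq_bigr => B _.
  rewrite -big_mkcondr /=; case: ifP => ABS.
    rewrite (big_pred1 (A :|: B)) // => D /=; rewrite [A :|: B == D]eq_sym.
    by case: eqP => [->|]; rewrite ?ABS ?andbF.
  by rewrite big_pred0 // => D; case: eqP => [<-|]; rewrite ?ABS ?andbF.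
rewrite big_distrl /= [RHS]big_mkcond /=; apply: eq_bigr => A _.
case AS: (A \subset S); last by rewrite big1 // => B _; rewrite subUset AS.
rewrite big_distrr /= [RHS]big_mkcond /=; apply: eq_bigr => B _.
by rewrite subUset AS.
Qed.

Lemma ev_eta T S : ev (eta T) S = (T == S)%:R.
Proof.
rewrite /eta (big_morph (ev^~ S) (fun x y => evM x y S) (ev1 S)).
have ev_factor j : ev (if j \in T then uR j else oneR - uR j) S
                   = ((j \in T) == (j \in S))%:R.
  by case: (j \in T); rewrite ?evD ?evN ?ev1 evU; case: (j \in S); rewrite ?subrr ?subr0.
under eq_bigr do rewrite ev_factor.
have [<-|/eqP TS] := T =P S; first by rewrite big1 // => j _; rewrite eqxx.
have [j Tj] : exists j, (j \in T) != (j \in S).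
  apply/existsP; apply: contraR TS; rewrite negb_exists => /forallP TS.
  by apply/eqP/setP => j; apply/eqP; rewrite -[_ == _]negbK TS.
by rewrite (bigD1 j) //= (negbTE Tj) mul0r.
Qed.

(* The evaluations separate points: the coefficient x A is recovered from
   ev x A by Moebius inversion, here by strong induction on #|A|. *)
Lemma ev_inj x y : (forall S, ev x S = ev y S) -> x = y.
Proof.
move=> exy; apply/ffunP.
suff coef_eq m (A : idx) : (#|A| < m)%N -> x A = y A by move=> A; apply: (coef_eq _ A).
elim: m A => // m IHm A Am.
have := exy A; rewrite /ev (bigD1 A) //= [in RHS](bigD1 A) //=.
rewrite (eq_bigr (fun B => y B)); first by move/addIr.
move=> B /andP[BA BnA]; apply: IHm.
have BpA : B \proper A by rewrite properEneq BnA BA.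
exact: leq_trans (proper_card BpA) Am.
Qed.

Lemma ev_neq (x y : R) : (x != y) = [exists S, ev x S != ev y S].
Proof.
apply/idP/existsP => [xy | [S]]; last by apply: contra => /eqP ->.
apply/existsP; apply: contraR xy; rewrite negb_exists => /forallP exy.
by apply/eqP/ev_inj => S; apply/eqP; rewrite -[_ == _]negbK exy.
Qed.

Definition comps n (x : vecR n) : {ffun idx -> vecZ n} :=
  [ffun T => [ffun i => ev (x i) T]].

Lemma ev_decomp n (y : {ffun idx -> vecZ n}) i S : ev (decomp y i) S = y S i.
Proof.
rewrite ffunE ev_sum.
under eq_bigr do rewrite evM evC ev_eta mulr_natr mulrb.
by rewrite -big_mkcond big_pred1_eq.
Qed.

Lemma decomp_comps n (x : vecR n) : decomp (comps x) = x.
Proof. by apply/ffunP => i; apply: ev_inj => S; rewrite ev_decomp !ffunE. Qed.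

Lemma componentE n (x : vecR n) T : component x T = comps x T.
Proof.
rewrite /component; case: pickP => [y /eqP <- | no_decomp] /=.
  by apply/ffunP => i; rewrite -ev_decomp !ffunE.
by have := no_decomp (comps x); rewrite decomp_comps eqxx.
Qed.

Lemma comp_codeE n (C : {set vecR n}) T : comp_code C T = [set comps x T | x in C].
Proof. by apply: eq_imset => x; rewrite componentE. Qed.

Lemma comps_inj n : injective (@comps n).
Proof.
move=> x y exy; apply/ffunP => i; apply: ev_inj => S.
by have := congr1 (fun f : {ffun idx -> vecZ n} => f S i) exy; rewrite !ffunE.
Qed.

Lemma ev_mul_eta T u S : ev (mulR (eta T) u) S = (T == S)%:R * ev u S.
Proof. by rewrite evM ev_eta. Qed.

Lemma comps_smul_eta n T (x : vecR n) S i :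
  comps (smul (eta T) x) S i = (T == S)%:R * comps x S i.
Proof. by rewrite !ffunE ev_mul_eta. Qed.

Lemma hdist_smul_eta n T (x y : vecR n) :
  hdist (smul (eta T) x) (smul (eta T) y) = hdist (comps x T) (comps y T).
Proof.
apply: eq_card => i; rewrite !inE ev_neq !ffunE.
apply/existsP/idP => [[S] | xyT]; last by exists T; rewrite !ev_mul_eta eqxx !mul1r.
by rewrite !ev_mul_eta; case: (T =P S) => [<-|]; rewrite ?mul1r ?mul0r ?eqxx.
Qed.

Lemma bigmin_ub (I : finType) (P : pred I) (F : I -> nat) m i :
  P i -> (\big[minn/m]_(j | P j) F j <= F i)%N.
Proof.
move=> Pi; have : i \in index_enum I by rewrite mem_index_enum.
elim: (index_enum I) => //= j r IHr; rewrite inE big_cons => /orP[/eqP<- | ir].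
  by rewrite Pi geq_min leqnn.
by case: ifP => _; rewrite ?geq_min IHr ?orbT.
Qed.

Section HammingDistance.
Variables (A : finType) (n : nat).
Implicit Types (D : {set {ffun 'I_n -> A}}) (x y : {ffun 'I_n -> A}).
Local Open Scope nat_scope.

Lemma dmin_le D : dmin D <= n.+1.
Proof. by rewrite /dmin; elim/big_rec: _ => // i v _ h; rewrite geq_min h orbT. Qed.

Lemma dmin_ub D x y : x \in D -> y \in D -> y != x -> dmin D <= hdist x y.
Proof.
move=> xD yD yx; rewrite /dmin; apply: leq_trans (bigmin_ub _ _ xD) _.
by apply: bigmin_ub; rewrite yD.
Qed.

Lemma dmin_lb D m :
  (forall x y, x \in D -> y \in D -> y != x -> m <= hdist x y) ->
  m <= n.+1 -> m <= dmin D.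
Proof.
move=> Dm mn; rewrite /dmin; elim/big_ind: _ => // [a b|x xD].
  by rewrite leq_min => -> ->.
elim/big_ind: _ => // [a b|y /andP[yD yx]]; last exact: Dm.
by rewrite leq_min => -> ->.
Qed.

Lemma hdist_gt0 x y : y != x -> 0 < hdist x y.
Proof.
move=> yx; rewrite card_gt0; apply/set0Pn.
have [i xyi] : exists i, x i != y i.
  apply/existsP; apply: contraR yx; rewrite negb_exists => /forallP xy.
  by apply/eqP/ffunP => i; apply/esym/eqP; rewrite -[_ == _]negbK xy.
by exists i; rewrite inE.
Qed.

Lemma hdist_prefix k (kn : k <= n) x y :
  (forall i : 'I_k, x (widen_ord kn i) = y (widen_ord kn i)) ->
  hdist x y <= n - k.
Proof.
move=> xy; set P := widen_ord kn @: [set: 'I_k].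
have cardP : #|P| = k.
  rewrite card_imset ?cardsT ?card_ord // => i j.
  by move/(congr1 val) => /= /val_inj.
apply: (@leq_trans #|~: P|).
  apply: subset_leq_card; apply/subsetP => j; rewrite !inE; apply: contra.
  by case/imsetP => i _ ->; rewrite xy.
by rewrite -(addKn k #|~: P|) -cardP cardsC card_ord.
Qed.

(* If distinct words are at distance > n - k, the restriction to the first k
   coordinates is injective, so there are at most |A|^k words. *)
Lemma card_le_prefix D k : k <= n ->
  (forall x y, x \in D -> y \in D -> y != x -> n - k < hdist x y) ->
  #|D| <= #|A| ^ k.
Proof.
move=> kn far; pose restr x : {ffun 'I_k -> A} := [ffun i => x (widen_ord kn i)].
rewrite -[k in _ ^ k]card_ord -card_ffun; apply: (@leq_card_in _ _ restr).
move=> x y xD yD exy; apply/eqP; apply: contraT => xy.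
have := far _ _ xD yD; rewrite eq_sym => /(_ xy); rewrite ltnNge hdist_prefix //.
by move=> i; have := congr1 (fun f : {ffun 'I_k -> A} => f i) exy; rewrite !ffunE.
Qed.

Lemma singleton_bound D : #|D| <= #|A| ^ (n.+1 - dmin D).
Proof.
have d_gt0 : 0 < dmin D by apply: dmin_lb => // x y _ _; apply: hdist_gt0.
have d_le := dmin_le D.
apply: card_le_prefix => [|x y xD yD yx]; first by lia.
by have := dmin_ub xD yD yx; lia.
Qed.

End HammingDistance.

Section ComponentCodes.
Variables (n : nat) (C : {set vecR n}).
Hypothesis linC : linear_code C.

Lemma code_sum (I : finType) (g : I -> vecR n) : (forall i, g i \in C) -> \sum_i g i \in C.
Proof. by case: linC => C0 CD _ gC; elim/big_ind: _ => // a b; apply: CD. Qed.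

(* (1) eta_T * C is a subcode of C whose distances are those of C_T. *)
Lemma dmin_code_le_comp T : (dmin C <= dmin (comp_code C T))%N.
Proof.
case: linC => _ _ CZ; apply: dmin_lb; last exact: dmin_le.
move=> a b; rewrite comp_codeE => /imsetP[x xC ->] /imsetP[y yC ->] ba.
rewrite -hdist_smul_eta; apply: dmin_ub; rewrite ?CZ //.
apply: contra ba => /eqP e; apply/eqP/ffunP => i.
by have := congr1 (fun z : vecR n => comps z T i) e; rewrite !comps_smul_eta eqxx !mul1r.
Qed.

(* (2) Distinct codewords differ in some component. *)
Lemma dmin_code_ge e : (forall T, e <= dmin (comp_code C T))%N -> (e <= n.+1)%N ->
  (e <= dmin C)%N.
Proof.
move=> eT en; apply: dmin_lb => // x y xC yC yx.
have [T xyT] : exists T, comps x T != comps y T.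
  apply/existsP; apply: contraR yx; rewrite negb_exists => /forallP xy.
  by apply/eqP/esym/comps_inj/ffunP => T; apply/eqP; rewrite -[_ == _]negbK xy.
have dT : (dmin (comp_code C T) <= hdist (comps x T) (comps y T))%N.
  by apply: dmin_ub; rewrite ?comp_codeE; [exact: imset_f | exact: imset_f | rewrite eq_sym].
apply: leq_trans (eT T) (leq_trans dT _).
apply: subset_leq_card; apply/subsetP => i; rewrite !inE.
by apply: contra => /eqP xyi; rewrite !ffunE xyi.
Qed.

(* The words of C are exactly the tuples of components taken freely from the
   C_T: given x_T \in C, the word \sum_T eta_T x_T lies in C and has
   components x_T. *)
Lemma comps_code :
  (@comps n) @: C = [set y : {ffun idx -> vecZ n} | [forall T, y T \in comp_code C T]].
Proof.
case: linC => _ _ CZ; apply/setP => y; rewrite inE.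
apply/imsetP/forallP => [[x xC ->] T | yC]; first by rewrite comp_codeE; apply: imset_f.
have /fin_all_exists[g gT] T : exists x, (x \in C) && (comps x T == y T).
  by have := yC T; rewrite comp_codeE => /imsetP[x xC ->]; exists x; rewrite xC eqxx.
exists (\sum_T smul (eta T) (g T)).
  by apply: code_sum => T; apply: CZ; case/andP: (gT T).
apply/ffunP => S; apply/ffunP => i; case/andP: (gT S) => _ /eqP <-.
rewrite !ffunE sum_ffunE ev_sum.
under eq_bigr do rewrite ffunE ev_mul_eta mulr_natl mulrb.
by rewrite -big_mkcond (big_pred1 S) // => T; rewrite /= eq_sym.
Qed.

Lemma card_code_prod : #|C| = (\prod_T #|comp_code C T|)%N.
Proof.
rewrite -(card_imset _ (@comps_inj n)) comps_code cardsE.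
rewrite (eq_card (B := family (fun T z => z \in comp_code C T))).
  by rewrite card_family foldrE big_image.
by move=> y; rewrite !inE; apply/forallP/familyP.
Qed.

End ComponentCodes.

Local Open Scope nat_scope.

Lemma eq_from_prod_le (I : finType) (f g : I -> nat) :
  (forall i, f i <= g i) -> (forall i, 0 < g i) ->
  \prod_i f i = \prod_i g i -> forall i, f i = g i.
Proof.
move=> fg g_gt0 prod_fg i; apply/eqP; rewrite eqn_leq fg leqNgt; apply/negP => fg_i.
move: prod_fg; rewrite (bigD1 i) //= [in RHS](bigD1 i) //=; apply/eqP; rewrite neq_ltn.
apply/orP; left; apply: (@leq_ltn_trans (f i * \prod_(j | j != i) g j)).
  by rewrite leq_mul2l leq_prod ?orbT.
by rewrite ltn_pmul2r // prodn_gt0.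
Qed.

Lemma card_Z4 : #|'Z_4| = 4.
Proof. by rewrite card_ord. Qed.

Lemma card_R_exp k : #|R| ^ k = \prod_(T : idx) 4 ^ k.
Proof.
have card_idx : #|idx| = 8 by rewrite -cardsT -powersetT card_powerset cardsT card_ord.
by rewrite card_ffun card_Z4 card_idx prod_nat_const card_idx expnAC.
Qed.

Section MDSComponents.
Variables (n : nat) (C : {set vecR n}).
Hypothesis linC : linear_code C.

Lemma card_comp_le T :
  #|comp_code C T| <= 4 ^ (n.+1 - dmin (comp_code C T)) <= 4 ^ (n.+1 - dmin C).
Proof.
have := singleton_bound (comp_code C T); rewrite card_Z4 => ->.
by rewrite leq_pexp2l // leq_sub2l // dmin_code_le_comp.
Qed.

Lemma mds_comps : MDS C ->
  forall T, #|comp_code C T| = 4 ^ (n.+1 - dmin C) /\ dmin (comp_code C T) = dmin C.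
Proof.
case=> cardC _.
have cardT : forall T, #|comp_code C T| = 4 ^ (n.+1 - dmin C).
  apply: eq_from_prod_le => [T | T | ].
  - by case/andP: (card_comp_le T) => /leq_trans; apply.
  - by rewrite expn_gt0.
  - by rewrite -card_code_prod // cardC card_R_exp.
move=> T; split => //; case/andP: (card_comp_le T); rewrite cardT => le1 le2.
have : n.+1 - dmin (comp_code C T) = n.+1 - dmin C.
  by apply/eqP; rewrite -(@eqn_exp2l 4) // eqn_leq le1 le2.
by have := dmin_le C; have := dmin_le (comp_code C T); have := dmin_code_le_comp linC T; lia.
Qed.

(* Conversely, MDS components with common distance e make C MDS, of
   distance e by (1) and (2), and of size prod_T 4^(n+1-e) by (3). *)
Lemma mds_of_comps e : (forall T, MDS (comp_code C T) /\ dmin (comp_code C T) = e) ->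
  MDS C.
Proof.
move=> compT; have dT T : dmin (comp_code C T) = e by case: (compT T).
have dC : dmin C = e.
  apply/eqP; rewrite eqn_leq -{1}(dT set0) dmin_code_le_comp //=.
  apply: dmin_code_ge => //; first by move=> T; rewrite dT.
  by rewrite -(dT set0) dmin_le.
split; last exact: dmin_le.
rewrite card_code_prod // dC card_R_exp; apply: eq_bigr => T _.
by case: (compT T) => -[-> _] _; rewrite card_Z4 dT.
Qed.

End MDSComponents.

Theorem mainTheorem3 (n : nat) (C : {set vecR n}) :
  linear_code C -> C != [set (0 : vecR n)%R] ->
  (MDS C <->
   ((forall T : idx, MDS (comp_code C T)) /\
    (forall T T' : idx, #|comp_code C T| = #|comp_code C T'| /\
                        dmin (comp_code C T) = dmin (comp_code C T')))).
Proof.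
move=> linC _; split => [mdsC | [mdsT sameT]].
  have compT := mds_comps linC mdsC.
  split => [T | T T']; case: (compT T) => cardT dT.
    by rewrite /MDS card_Z4 cardT dT; split; last exact: dmin_le.
  by case: (compT T') => cardT' dT'; rewrite cardT cardT' dT dT'.
apply: (mds_of_comps linC (e := dmin (comp_code C set0))) => T.
by split; [exact: mdsT | case: (sameT T set0)].
Qed.
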